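(* Let $\nu\in(0,1]$, $\varrho,c_l,\alpha,\delta>0$, $x\in K_\nu^\varrho$, $g^\delta\in\mathbb Y$ with $\|g^\delta-Ax\|_{\mathbb Y}\le\delta$, and $\hat x_\alpha\in R_\alpha(g^\delta)$. If $c_l\varrho^{-1/\nu}\delta^{1/\nu}\le\alpha$, then $\varrho_\nu(\hat x_\alpha)\le(2+c_l^{-\nu})\varrho$.
   Context: Standing setting: $\mathbb X$ real Banach space, $\tau$ a topology with $(\mathbb X,\tau)$ locally convex Hausdorff; $\mathcal R:\mathbb X\to(-\infty,\infty]$ proper convex with $\tau$-compact sublevel sets; $\mathbb Y$ real Hilbert space; $A:\mathbb X\to\mathbb Y$ linear, $\tau$-to-weak continuous. $T_\alpha(x,g):=\frac1{2\alpha}\|g-Ax\|_{\mathbb Y}^2+\mathcal R(x)$, $R_\alpha(g):=\operatorname{argmin}_{x\in\mathrm{dom}(\mathcal R)}T_\alpha(x,g)$. For $\nu\ge0$, $\varrho_\nu(x):=\sup\{\alpha^{-\nu}\|Ax-Ax_\alpha\|_{\mathbb Y}:\alpha>0,x_\alpha\in R_\alpha(Ax)\}$ and $K_\nu^\varrho:=\{x\in\mathbb X:\varrho_\nu(x)\le\varrho\}$. *)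

From HB Require Import structures.
From mathcomp Require Import all_boot all_order all_algebra.
From mathcomp Require Import all_classical all_reals all_analysis.
Set Implicit Arguments. Unset Strict Implicit. Unset Printing Implicit Defensive.
Import Order.TTheory GRing.Theory Num.Theory.
Import numFieldNormedType.Exports.
Local Open Scope classical_set_scope.
Local Open Scope ring_scope.

(* A norm on a real vector space that makes it a Banach space
   (the norm of X is a separate datum from the topology tau carried by X). *)
Definition is_banach_norm (R : realType) (X : lmodType R) (nX : X -> R) : Prop :=
  [/\ (forall x, 0 <= nX x),
      (forall x, nX x = 0 -> x = 0),
      (forall (a : R) x, nX (a *: x) = `|a| * nX x),
      (forall x y, nX (x + y) <= nX x + nX y) &
      (forall u : nat -> X,
         (forall e : R, 0 < e -> exists N : nat, forall m n : nat,
            (N <= m)%N -> (N <= n)%N -> nX (u m - u n) < e) ->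
         exists l : X, forall e : R, 0 < e -> exists N : nat, forall n : nat,
            (N <= n)%N -> nX (u n - l) < e)].

Definition is_inner_product (R : realType) (Y : normedModType R)
  (ip : Y -> Y -> R) : Prop :=
  [/\ (forall y z, ip y z = ip z y),
      (forall (a : R) y z w, ip (a *: y + z) w = a * ip y w + ip z w) &
      (forall y, ip y y = `|y| ^+ 2)].

Definition proper_fun (R : realType) (X : Type) (F : X -> \bar R) : Prop :=
  (forall x, F x != -oo%E) /\ (exists x, (F x < +oo)%E).

Definition convex_efun (R : realType) (X : lmodType R) (F : X -> \bar R) : Prop :=
  forall (x y : X) (l : R), 0 < l < 1 ->
    (F (l *: x + (1 - l) *: y)%R <= l%:E * F x + (1 - l)%:E * F y)%E.

Definition Tik (R : realType) (X : Type) (Y : normedModType R)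
  (A : X -> Y) (Rf : X -> \bar R) (alpha : R) (x : X) (g : Y) : \bar R :=
  (((2 * alpha)^-1 * `|g - A x| ^+ 2)%:E + Rf x)%E.

Definition Rmin (R : realType) (X : Type) (Y : normedModType R)
  (A : X -> Y) (Rf : X -> \bar R) (alpha : R) (g : Y) : set X :=
  [set x | (Rf x < +oo)%E /\
     forall z, (Rf z < +oo)%E -> (Tik A Rf alpha x g <= Tik A Rf alpha z g)%E].

Definition rho_nu (R : realType) (X : Type) (Y : normedModType R)
  (A : X -> Y) (Rf : X -> \bar R) (nu : R) (x : X) : \bar R :=
  ereal_sup [set e | exists (alpha : R) (xa : X),
     [/\ 0 < alpha, Rmin A Rf alpha (A x) xa &
         e = (alpha `^ (- nu) * `|A x - A xa|)%:E]].

Definition Kset (R : realType) (X : Type) (Y : normedModType R)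
  (A : X -> Y) (Rf : X -> \bar R) (nu varrho : R) : set X :=
  [set x | (rho_nu A Rf nu x <= varrho%:E)%E].

From HB Require Import structures.
From mathcomp Require Import all_boot all_order all_algebra.
From mathcomp Require Import all_classical all_reals all_analysis.
From mathcomp Require Import ring lra.
Import Order.TTheory GRing.Theory Num.Theory.
Import numFieldNormedType.Exports.
Local Open Scope classical_set_scope.
Local Open Scope ring_scope.
Set Implicit Arguments. Unset Strict Implicit.

(* The proof rests on the first-order optimality condition of Tikhonov
   minimizers, R(x1) - R(z) <= a^-1 <g - A x1, A x1 - A z>, obtained by
   comparing T_a along segments (convexity of R).  Adding two such
   conditions shows that, for a fixed parameter, both g |-> A x_a(g) and
   g |-> g - A x_a(g) are 1-Lipschitz, and that re-regularizing A x1 with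
   a parameter b moves it by at most b/a times the residual of x1.  Next,
   minimizers exist: T_a is lower semicontinuous (weak lower semicontinuity
   of the norm plus closed sublevel sets of R) and has compact sublevel sets.
   Finally, to bound varrho_nu(xh) we re-regularize A xh with a parameter b:
   for b <= alpha the comparison lemma and the residual bound
   |g^delta - A xh| <= (1 + cl^(-nu)) varrho alpha^nu apply, and for
   b > alpha we compare with the exact-data minimizer x_b, using
   |A xh - A x| <= (1 + cl^(-nu)) varrho alpha^nu and x in K_nu^varrho. *)

Section InnerProduct.
Variables (R : realType) (Y : normedModType R) (ip : Y -> Y -> R).
Hypothesis hip : is_inner_product ip.

Lemma ipC y w : ip y w = ip w y.
Proof. by case: hip. Qed.

Lemma ip_norm y : ip y y = `|y| ^+ 2.
Proof. by case: hip. Qed.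

Lemma ipDl y z w : ip (y + z) w = ip y w + ip z w.
Proof. by case: hip => _ hl _; have := hl 1 y z w; rewrite scale1r mul1r. Qed.

Lemma ip0l w : ip 0 w = 0.
Proof. by have := ipDl 0 0 w; rewrite addr0 => h; lra. Qed.

Lemma ipZl a y w : ip (a *: y) w = a * ip y w.
Proof. by case: hip => _ hl _; have := hl a y 0 w; rewrite !addr0 ip0l addr0. Qed.

Lemma ipBl y z w : ip (y - z) w = ip y w - ip z w.
Proof. by rewrite ipDl -scaleN1r ipZl mulN1r. Qed.

Lemma ipBr y z w : ip w (y - z) = ip w y - ip w z.
Proof. by rewrite !(ipC w) ipBl. Qed.

Lemma ipZr a y w : ip w (a *: y) = a * ip w y.
Proof. by rewrite !(ipC w) ipZl. Qed.

Lemma normB_sqr u v : `|u - v| ^+ 2 = `|u| ^+ 2 - 2 * ip u v + `|v| ^+ 2.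
Proof. by rewrite -!ip_norm !ipBl !ipBr (ipC v u); ring. Qed.

(* Cauchy--Schwarz: expand 0 <= |u - t v|^2 at the optimal t = <u,v>/|v|^2. *)
Lemma ip_le_norm u v : ip u v <= `|u| * `|v|.
Proof.
have [->|v0] := eqVneq v 0.
  by rewrite normr0 mulr0 -(scale0r (0 : Y)) ipZr mul0r.
have s0 : 0 < `|v| ^+ 2 by rewrite exprn_gt0 // normr_gt0.
pose t := ip u v / `|v| ^+ 2.
have ts : t * `|v| ^+ 2 = ip u v by rewrite /t mulfVK // gt_eqF.
have expand := normB_sqr u (t *: v).
rewrite ipZr normrZ exprMn real_normK ?num_real // in expand.
have : 0 <= `|u - t *: v| ^+ 2 by rewrite exprn_ge0.
have : 0 <= `|u| * `|v| by rewrite mulr_ge0.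
rewrite expand exprMn; nra.
Qed.

Lemma firmly_nonexpansive G D :
  `|D| ^+ 2 <= ip G D -> `|D| <= `|G| /\ `|G - D| <= `|G|.
Proof.
move=> hGD; have cs := ip_le_norm G D.
have nD : 0 <= `|D| by []; have nG : 0 <= `|G| by [].
have nGD : 0 <= `|G - D| by [].
have := normB_sqr G D; split; nra.
Qed.

End InnerProduct.

Lemma le0_of_le_small_multiples (R : realType) (D c : R) : 0 <= c ->
  (forall t, 0 < t -> t < 1 -> D <= t * c) -> D <= 0.
Proof.
move=> c0 h; rewrite leNgt; apply/negP => D0.
pose t := D / (2 * (D + c)).
have tDc : t * (D + c) = D / 2 by rewrite /t; field; rewrite gt_eqF //; lra.
have t0 : 0 < t by rewrite /t divr_gt0 //; lra.
have t1 : t < 1.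
  by rewrite -(ltr_pM2r (_ : 0 < D + c)) ?tDc; lra.
have := h t t0 t1; nra.
Qed.

Lemma subrBB (V : zmodType) (a b c d : V) : (a - b) - (c - d) = (a - c) - (b - d).
Proof. by rewrite !opprB addrACA [RHS]addrACA [- b - c]addrC. Qed.

Lemma residual_segment (R : pzRingType) (V : lmodType R) (g a b : V) (t : R) :
  g - (t *: b + (1 - t) *: a) = g - a - t *: (b - a).
Proof.
rewrite -addrA -opprD; congr (g - _).
by rewrite addrC scalerBl scale1r scalerBr -addrA [- _ + _]addrC.
Qed.

Section TikhonovMinimizers.
Variables (R : realType) (X : lmodType R) (Y : normedModType R).
Variables (ip : Y -> Y -> R) (A : {linear X -> Y}) (Rf : X -> \bar R).
Hypotheses (hip : is_inner_product ip) (hRp : proper_fun Rf).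
Hypothesis hRc : convex_efun Rf.

Lemma proper_finite x : (Rf x < +oo)%E -> exists r, Rf x = r%:E.
Proof. by case: hRp => /(_ x); case: (Rf x) => [r| |] // _ _ _; exists r. Qed.

(* First-order optimality of a Tikhonov minimizer x1 of T_a(., g): comparing
   T_a at x1 with T_a along the segment from x1 towards z gives
   R(x1) - R(z) <= a^-1 <g - A x1, A x1 - A z>. *)
Lemma Rmin_variational a g x1 z r1 rz : 0 < a -> Rmin A Rf a g x1 ->
  Rf x1 = r1%:E -> Rf z = rz%:E ->
  r1 - rz <= a^-1 * ip (g - A x1) (A x1 - A z).
Proof.
move=> a0 [_ hmin] e1 ez.
set u := g - A x1; set v := A z - A x1.
have -> : A x1 - A z = (-1) *: v by rewrite scaleN1r /v opprB.
rewrite (ipZr hip) mulN1r.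
set K := (2 * a)^-1.
have K0 : 0 < K by rewrite invr_gt0 mulr_gt0.
have aK : a^-1 = 2 * K by rewrite /K invfM mulrA mulfV ?mul1r // pnatr_eq0.
suff : r1 - rz + 2 * K * ip u v <= 0 by rewrite aK; lra.
apply: (@le0_of_le_small_multiples _ _ (K * `|v| ^+ 2)).
  by rewrite mulr_ge0 ?exprn_ge0 // ltW.
move=> t t0 t1.
pose w := t *: z + (1 - t) *: x1.
have convex_w : (Rf w <= (t * rz + (1 - t) * r1)%:E)%E.
  by have := @hRc z x1 t; rewrite t0 t1 ez e1 -!EFinM -EFinD; apply.
have [rw ew] : exists rw, Rf w = rw%:E.
  by apply: proper_finite; apply: le_lt_trans convex_w _; rewrite ltry.
have residual_w : g - A w = u - (t *: v).
  by rewrite /w linearD !linearZ /= residual_segment scalerN.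
have hw : (Rf w < +oo)%E by rewrite ew ltry.
have := hmin w hw; rewrite /Tik ew e1 -/u residual_w -!EFinD lee_fin.
rewrite (normB_sqr hip u) (ipZr hip) normrZ exprMn real_normK ?num_real //.
move: convex_w; rewrite ew lee_fin => convex_w h.
have : t * (r1 - rz + 2 * K * ip u v) <= t * (t * (K * `|v| ^+ 2)) by nra.
by rewrite ler_pM2l.
Qed.

(* Adding the optimality conditions of two minimizers with the same
   parameter shows that g |-> A x_a(g) is firmly nonexpansive. *)
Lemma Rmin_firm a g1 g2 x1 x2 : 0 < a ->
  Rmin A Rf a g1 x1 -> Rmin A Rf a g2 x2 ->
  `|A x1 - A x2| ^+ 2 <= ip (g1 - g2) (A x1 - A x2).
Proof.
move=> a0 h1 h2.
have [r1 e1] := proper_finite h1.1; have [r2 e2] := proper_finite h2.1.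
have v1 := Rmin_variational a0 h1 e1 e2.
have v2 := Rmin_variational a0 h2 e2 e1.
set D := A x1 - A x2 in v1 v2 *.
have flip : A x2 - A x1 = (-1) *: D by rewrite scaleN1r opprB.
rewrite flip (ipZr hip) mulN1r mulrN in v2.
have split_residual : ip (g1 - A x1) D - ip (g2 - A x2) D = ip (g1 - g2) D - `|D| ^+ 2.
  by rewrite -(ipBl hip) subrBB (ipBl hip) (ip_norm hip).
have : 0 <= a^-1 * (ip (g1 - A x1) D - ip (g2 - A x2) D) by rewrite mulrBr; lra.
by rewrite pmulr_rge0 ?invr_gt0 // split_residual subr_ge0.
Qed.

Lemma Rmin_lipschitz a g1 g2 x1 x2 : 0 < a ->
  Rmin A Rf a g1 x1 -> Rmin A Rf a g2 x2 ->
  `|A x1 - A x2| <= `|g1 - g2| /\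
  `|(g1 - A x1) - (g2 - A x2)| <= `|g1 - g2|.
Proof.
move=> a0 h1 h2; have := firmly_nonexpansive hip (Rmin_firm a0 h1 h2).
by rewrite subrBB.
Qed.

Lemma Rmin_compare a b g x1 x2 : 0 < a -> 0 < b ->
  Rmin A Rf a g x1 -> Rmin A Rf b (A x1) x2 ->
  `|A x1 - A x2| <= b / a * `|g - A x1|.
Proof.
move=> a0 b0 h1 h2.
have [r1 e1] := proper_finite h1.1; have [r2 e2] := proper_finite h2.1.
have v1 := Rmin_variational a0 h1 e1 e2.
have v2 := Rmin_variational b0 h2 e2 e1.
set D := A x1 - A x2 in v1 v2 *.
have flip : A x2 - A x1 = (-1) *: D by rewrite scaleN1r opprB.
rewrite flip (ipZr hip) (ip_norm hip) in v2.
have cs := ip_le_norm hip (g - A x1) D.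
set d := `|D| in v2 cs *; set u := `|g - A x1| in cs *.
have d0 : 0 <= d by rewrite /d normr_ge0.
have u0 : 0 <= u by rewrite /u normr_ge0.
have ai : 0 < a^-1 by rewrite invr_gt0.
have h : b^-1 * d ^+ 2 <= b^-1 * (b / a * u * d).
  rewrite !mulrA mulVf ?gt_eqF // mul1r; nra.
rewrite ler_pM2l ?invr_gt0 // in h.
have : 0 <= b / a * u by rewrite mulr_ge0 // divr_ge0 // ltW.
nra.
Qed.

End TikhonovMinimizers.

Lemma lee_of_real_ubs (R : realType) (x y : \bar R) :
  (forall t : R, (y < t%:E)%E -> (x <= t%:E)%E) -> (x <= y)%E.
Proof.
case: x y => [r| |] [s| |] h //=; rewrite ?leey ?leNye //.
- rewrite lee_fin; apply/ler_addgt0Pr => e e0.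
  by rewrite -lee_fin h // lte_fin ltrDl.
- by have := h (r - 1)%R (ltNyr _); rewrite lee_fin => hr; exfalso; lra.
- by have := h (s + 1)%R; rewrite lte_fin ltrDl ltr01 leye_eq => /(_ isT).
- by have := h 0 (ltNyr _).
Qed.

(* A lower semicontinuous function whose sublevel set at some level c is
   nonempty and contained in a compact set attains its infimum: the sublevel
   sets {T <= t} above the values of T generate a proper filter on the
   compact set, and any cluster point of it is a minimizer. *)
Lemma lsc_attains_min (R : realType) (X : topologicalType) (T : X -> \bar R)
    (K : set X) (c : R) (z0 : X) :
  lower_semicontinuous T -> compact K ->
  [set x | (T x <= c%:E)%E] `<=` K -> (T z0 < c%:E)%E ->
  exists z, forall w, (T z <= T w)%E.
Proof.
move=> lscT cK subK Tz0.
pose I := [set t : R | exists w, (T w < t%:E)%E].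
pose B t := [set x | (T x <= t%:E)%E].
have F_proper : ProperFilter (filter_from I B).
  apply: filter_from_proper => [|t [w wt]]; last by exists w; exact: ltW.
  apply: filter_from_filter => [|i j Ii Ij]; first by exists c, z0.
  have [ij|ji] := leP i j.
    by exists i => // x /= xi; split => //; apply: le_trans xi _; rewrite lee_fin.
  by exists j => // x /= xj; split => //; apply: le_trans xj _; rewrite lee_fin ltW.
have FK : filter_from I B K by exists c; [exists z0 | exact: subK].
have [z [_ z_cluster]] := cK _ F_proper FK.
exists z => w; apply: lee_of_real_ubs => t wt; rewrite leNgt; apply/negP => tz.
have [V zV Vt] := lscT z t tz.
have FBt : filter_from I B (B t) by exists t => //; exists w.
have [y [/= yt /Vt ty]] := z_cluster (B t) V FBt zV.
by move: ty; rewrite ltNge yt.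
Qed.

(* In a Hausdorff space, compact sublevel sets are closed, so their
   complements {t < f} are open. *)
Lemma compact_sublevel_lsc (R : realType) (X : topologicalType) (f : X -> \bar R) :
  hausdorff_space X -> (forall c : R, compact [set x | (f x <= c%:E)%E]) ->
  lower_semicontinuous f.
Proof.
move=> hX hf; apply/lower_semicontinuousP => a.
have -> : [set x | (a%:E < f x)%E] = ~` [set x | (f x <= a%:E)%E].
  by apply/seteqP; split => x /=; rewrite ltNge => /negP.
exact: closed_openC (compact_closed hX (hf a)).
Qed.

Lemma lscD (R : realType) (X : topologicalType) (f : X -> R) (h : X -> \bar R) :
  lower_semicontinuous (fun x => (f x)%:E) -> lower_semicontinuous h ->
  (forall x, h x != -oo%E) ->
  lower_semicontinuous (fun x => ((f x)%:E + h x)%E).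
Proof.
move=> lscf lsch hfin z a afz.
have [a1 [a2 [a12 a1f a2h]]] :
    exists a1 a2, [/\ a = a1 + a2, a1 < f z & (a2%:E < h z)%E].
  move: afz (hfin z); case: (h z) => [r| |] // afz _.
  - rewrite -EFinD lte_fin in afz.
    exists (f z - (f z + r - a) / 2), (r - (f z + r - a) / 2).
    by split; [field | lra | rewrite lte_fin; lra].
  - by exists (f z - 1), (a - f z + 1); split; [ring | lra | rewrite ltry].
have [V1 zV1 V1f] := lscf z a1 a1f.
have [V2 zV2 V2h] := lsch z a2 a2h.
exists (V1 `&` V2); first exact: filterI.
move=> y [/V1f f1 /V2h h2]; rewrite lte_fin in f1; move: h2; rewrite a12.
case: (h y) => [r| |] // h2; last by rewrite addey // ltry.
by rewrite -EFinD lte_fin; rewrite lte_fin in h2; lra.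
Qed.

(* If each x |-> <A x, y> is continuous (A is tau-to-weak continuous), then
   x |-> k |g - A x|^2 is lower semicontinuous (weak lower semicontinuity of
   the norm): with w = g - A z, |g - A x|^2 >= |w|^2 - 2 <A x - A z, w>. *)
Lemma lsc_residual_sqr (R : realType) (X : topologicalType) (Y : normedModType R)
    (ip : Y -> Y -> R) (hip : is_inner_product ip) (A : X -> Y)
    (hA : forall y : Y, continuous (fun x : X => ip (A x) y)) (k : R) (g : Y) :
  0 < k -> lower_semicontinuous (fun x => (k * `|g - A x| ^+ 2)%:E).
Proof.
move=> k0 z a; rewrite lte_fin => az.
set w := g - A z.
pose e := (k * `|w| ^+ 2 - a) / (4 * k).
have ke : k * e = (k * `|w| ^+ 2 - a) / 4 by rewrite /e; field; rewrite gt_eqF.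
have e0 : 0 < e by rewrite /e divr_gt0 ?mulr_gt0 //; lra.
exists [set x | `|ip (A z) w - ip (A x) w| < e].
  exact: (@cvgr_dist_lt _ _ _ _ (nbhs_filter z) _ _ (hA w z) _ e0).
move=> x /= /ltr_normlP [close _]; rewrite lte_fin.
have lower_bound : `|w| ^+ 2 - 2 * e < `|g - A x| ^+ 2.
  have := exprn_ge0 2 (normr_ge0 (g - A x - w)).
  rewrite (normB_sqr hip) !(ipBl hip).
  have : ip g w - ip (A z) w = `|w| ^+ 2 by rewrite -(ipBl hip) (ip_norm hip).
  lra.
have : k * (`|w| ^+ 2 - 2 * e) < k * `|g - A x| ^+ 2 by rewrite ltr_pM2l.
lra.
Qed.

(* Existence of Tikhonov minimizers: T_a(., g) is lower semicontinuous, it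
   dominates R, whose sublevel sets are compact, and it is finite somewhere. *)
Lemma Rmin_exists (R : realType) (X : tvsType R) (hX : hausdorff_space X)
    (Y : normedModType R) (ip : Y -> Y -> R) (hip : is_inner_product ip)
    (A : {linear X -> Y}) (hA : forall y : Y, continuous (fun x : X => ip (A x) y))
    (Rf : X -> \bar R) (hRp : proper_fun Rf)
    (hRk : forall c : R, compact [set x : X | (Rf x <= c%:E)%E])
    (a : R) (g : Y) : 0 < a -> exists x, Rmin A Rf a g x.
Proof.
move=> a0; pose T x := Tik A Rf a x g.
have K0 : 0 < (2 * a)^-1 by rewrite invr_gt0 mulr_gt0.
have lscT : lower_semicontinuous T :=
  lscD (lsc_residual_sqr hip hA (g := g) K0) (compact_sublevel_lsc hX hRk) hRp.1.
have RfT x : (Rf x <= T x)%E.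
  rewrite /T /Tik; case: (Rf x) => [r| |] //; rewrite ?addey //.
  by rewrite -EFinD lee_fin lerDr mulr_ge0 ?exprn_ge0 // ltW.
have [z0 Rz0] := hRp.2; have [r0 er0] := proper_finite hRp Rz0.
pose c := (2 * a)^-1 * `|g - A z0| ^+ 2 + r0 + 1.
have Tz0 : (T z0 < c%:E)%E by rewrite /T /Tik er0 -EFinD lte_fin ltrDl.
have sub : [set x | (T x <= c%:E)%E] `<=` [set x | (Rf x <= c%:E)%E].
  by move=> x /= Tx; apply: le_trans (RfT x) Tx.
have [z zmin] := lsc_attains_min lscT (hRk c) sub Tz0.
exists z; split => [|w _]; last exact: zmin.
by apply: le_lt_trans (RfT z) (le_lt_trans (zmin z0) (lt_trans Tz0 _)); rewrite ltry.
Qed.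

Lemma Kset_bound (R : realType) (X : Type) (Y : normedModType R)
    (A : X -> Y) (Rf : X -> \bar R) (nu varrho a : R) (x xa : X) :
  Kset A Rf nu varrho x -> 0 < a -> Rmin A Rf a (A x) xa ->
  `|A x - A xa| <= varrho * a `^ nu.
Proof.
move=> hx a0 hxa.
have h : ((a `^ (- nu) * `|A x - A xa|)%:E <= rho_nu A Rf nu x)%E.
  by apply: ereal_sup_ubound; exists a, xa.
have := le_trans h hx; rewrite lee_fin powRN mulrC.
by rewrite ler_pdivrMr // powR_gt0.
Qed.

Lemma rho_nu_le (R : realType) (X : Type) (Y : normedModType R)
    (A : X -> Y) (Rf : X -> \bar R) (nu M : R) (x : X) :
  (forall b y, 0 < b -> Rmin A Rf b (A x) y -> `|A x - A y| <= M * b `^ nu) ->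
  (rho_nu A Rf nu x <= M%:E)%E.
Proof.
move=> hM; apply: ge_ereal_sup => _ [b [y [b0 hy ->]]].
by rewrite lee_fin powRN mulrC ler_pdivrMr ?powR_gt0 // hM.
Qed.

Lemma noise_level_bound (R : realType) (nu varrho cl alpha delta : R) :
  0 < nu -> 0 < varrho -> 0 < cl -> 0 < alpha -> 0 < delta ->
  cl * varrho `^ (- nu^-1) * delta `^ (nu^-1) <= alpha ->
  delta <= cl `^ (- nu) * varrho * alpha `^ nu.
Proof.
move=> nu0 rho0 cl0 a0 d0 hc.
have lhs0 : 0 <= cl * varrho `^ (- nu^-1) * delta `^ (nu^-1).
  by rewrite !mulr_ge0 ?powR_ge0 // ltW.
have := @ge0_ler_powR _ nu (ltW nu0) _ _ lhs0 (ltW a0) hc.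
rewrite !powRM ?mulr_ge0 ?powR_ge0 ?(ltW cl0) // -!powRrM mulNr mulVf ?gt_eqF //.
rewrite (powRr1 (ltW d0)) (powR_inv1 (ltW rho0)) => h.
have cnu0 : 0 < cl `^ nu by rewrite powR_gt0.
have -> : delta = cl `^ (- nu) * varrho * (cl `^ nu * varrho^-1 * delta).
  by rewrite powRN; field; rewrite !gt_eqF.
by rewrite ler_wpM2l // mulr_ge0 ?powR_ge0 // ltW.
Qed.

(* For 0 <= nu <= 1 the map a |-> a^(nu - 1) is nonincreasing:
   b / a * a^nu <= b^nu whenever 0 < b <= a. *)
Lemma powR_ratio_le (R : realType) (nu a b : R) :
  0 <= nu <= 1 -> 0 < b <= a -> b / a * a `^ nu <= b `^ nu.
Proof.
move=> /andP [nu0 nu1] /andP [b0 ba].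
have a0 : 0 < a by apply: lt_le_trans ba.
have split_pow c : 0 < c -> c = c `^ (1 - nu) * c `^ nu.
  move=> c0; rewrite -powRD; last by apply/implyP => _; rewrite gt_eqF.
  by rewrite subrK powRr1 // ltW.
have mono : b `^ (1 - nu) <= a `^ (1 - nu).
  by apply: ge0_ler_powR; rewrite ?subr_ge0 // nnegrE ltW.
rewrite mulrAC ler_pdivrMr // {1}(split_pow b b0) {2}(split_pow a a0).
have := ler_wpM2r (mulr_ge0 (powR_ge0 b nu) (powR_ge0 a nu)) mono.
lra.
Qed.

(* The setting of Proposition 3.11, with the a-priori parameter choice
   already turned into the noise bound delta <= kappa varrho alpha^nu
   (kappa = cl^(-nu)); xa is the exact-data reconstruction for alpha and
   xh the noisy one. *)
Section ParameterChoice.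
Variables (R : realType) (X : lmodType R) (Y : normedModType R).
Variables (ip : Y -> Y -> R) (A : {linear X -> Y}) (Rf : X -> \bar R).
Hypotheses (hip : is_inner_product ip) (hRp : proper_fun Rf).
Hypothesis hRc : convex_efun Rf.
Variables (nu varrho kappa alpha delta : R) (x xa xh : X) (gd : Y).
Hypotheses (hnu : 0 <= nu <= 1) (hvarrho : 0 <= varrho) (hkappa : 0 <= kappa).
Hypothesis halpha : 0 < alpha.
Hypothesis hx : Kset A Rf nu varrho x.
Hypothesis hgd : `|gd - A x| <= delta.
Hypothesis hdelta : delta <= kappa * varrho * alpha `^ nu.
Hypothesis hxa : Rmin A Rf alpha (A x) xa.
Hypothesis hxh : Rmin A Rf alpha gd xh.
Hypothesis Rmin_ex : forall b, 0 < b -> exists xb, Rmin A Rf b (A x) xb.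

(* The residual map is 1-Lipschitz, so the noisy residual exceeds the
   exact-data residual |A x - A xa| <= varrho alpha^nu by at most delta. *)
Lemma noisy_residual_bound : `|gd - A xh| <= (1 + kappa) * varrho * alpha `^ nu.
Proof.
have [_ res] := Rmin_lipschitz hip hRp hRc halpha hxh hxa.
have exact_rate := Kset_bound hx halpha hxa.
have := ler_normD ((gd - A xh) - (A x - A xa)) (A x - A xa); rewrite subrK.
have := hgd; have := hdelta; lra.
Qed.

(* Likewise the image map is 1-Lipschitz: |A xh - A xa| <= delta. *)
Lemma noisy_image_bound : `|A xh - A x| <= (1 + kappa) * varrho * alpha `^ nu.
Proof.
have [img _] := Rmin_lipschitz hip hRp hRc halpha hxh hxa.
have exact_rate := Kset_bound hx halpha hxa.
have := ler_distD (A xa) (A xh) (A x); rewrite (distrC (A xa)).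
have := hgd; have := hdelta; lra.
Qed.

(* Re-regularizing A xh with a smaller parameter b <= alpha: the comparison
   lemma and the residual bound give the rate (1 + kappa) varrho b^nu. *)
Lemma small_parameter_rate b y : 0 < b <= alpha -> Rmin A Rf b (A xh) y ->
  `|A xh - A y| <= (2 + kappa) * varrho * b `^ nu.
Proof.
move=> hb hy; have /andP [b0 _] := hb.
have cmp := Rmin_compare hip hRp hRc halpha b0 hxh hy.
have ratio := powR_ratio_le hnu hb.
have c0 : 0 <= (1 + kappa) * varrho by rewrite mulr_ge0 // addr_ge0.
have := ler_wpM2l (divr_ge0 (ltW b0) (ltW halpha)) noisy_residual_bound.
have := ler_wpM2l c0 ratio; have := mulr_ge0 hvarrho (powR_ge0 b nu).
lra.
Qed.

(* Re-regularizing with a larger parameter b > alpha: compare with the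
   exact-data reconstruction xb of parameter b, whose rate is varrho b^nu. *)
Lemma large_parameter_rate b y : alpha < b -> Rmin A Rf b (A xh) y ->
  `|A xh - A y| <= (2 + kappa) * varrho * b `^ nu.
Proof.
move=> ab hy; have b0 : 0 < b by apply: lt_trans ab.
have [xb hxb] := Rmin_ex b0.
have [_ res] := Rmin_lipschitz hip hRp hRc b0 hy hxb.
have exact_rate := Kset_bound hx b0 hxb.
have := ler_normD ((A xh - A y) - (A x - A xb)) (A x - A xb); rewrite subrK.
have mono : alpha `^ nu <= b `^ nu.
  by case/andP: hnu => nu0 _; apply: ge0_ler_powR => //; rewrite ?nnegrE; apply: ltW.
have := noisy_image_bound; have := ler_wpM2l (mulr_ge0 hkappa hvarrho) mono.
have := ler_wpM2l hvarrho mono.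
nra.
Qed.

Lemma noisy_reconstruction_in_K :
  (rho_nu A Rf nu xh <= ((2 + kappa) * varrho)%:E)%E.
Proof.
apply: rho_nu_le => b y b0 hy.
have [ba|ab] := leP b alpha.
- by apply: small_parameter_rate hy; rewrite b0 ba.
- exact: large_parameter_rate hy.
Qed.

End ParameterChoice.

Unset Implicit Arguments. Set Strict Implicit.

Theorem proposition3p11
  (R : realType)
  (X : tvsType R) (hX : hausdorff_space X)
  (nX : X -> R) (hnX : is_banach_norm nX)
  (Y : completeNormedModType R) (ip : Y -> Y -> R) (hip : is_inner_product ip)
  (A : {linear X -> Y})
  (hA : forall y : Y, continuous (fun x : X => ip (A x) y))
  (Rf : X -> \bar R) (hRp : proper_fun Rf) (hRc : convex_efun Rf)
  (hRk : forall c : R, compact [set x : X | (Rf x <= c%:E)%E])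
  (nu varrho cl alpha delta : R)
  (hnu : 0 < nu <= 1) (hvarrho : 0 < varrho) (hcl : 0 < cl)
  (halpha : 0 < alpha) (hdelta : 0 < delta)
  (x : X) (hx : Kset A Rf nu varrho x)
  (gd : Y) (hgd : `|gd - A x| <= delta)
  (xh : X) (hxh : Rmin A Rf alpha gd xh) :
  cl * varrho `^ (- nu^-1) * delta `^ (nu^-1) <= alpha ->
  (rho_nu A Rf nu xh <= ((2 + cl `^ (- nu)) * varrho)%:E)%E.
Proof.
move=> choice; have /andP [nu0 nu1] := hnu.
have Rmin_ex b g : 0 < b -> exists xb, Rmin A Rf b g xb :=
  fun b0 => Rmin_exists hX hip hA hRp hRk g b0.
have [xa hxa] := Rmin_ex alpha (A x) halpha.
have noise := noise_level_bound nu0 hvarrho hcl halpha hdelta choice.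
apply: (noisy_reconstruction_in_K hip hRp hRc _ (ltW hvarrho) _ halpha hx hgd noise hxa hxh).
- by rewrite (ltW nu0) nu1.
- exact: powR_ge0.
- by move=> b; exact: Rmin_ex.
Qed.
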